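(* Let $\ell,r$ be integers with $r\ge 2$ and $r+1\le\ell\le 2r-1$, and let $m=m_{r,\ell}$. Define $h(q)=(q)_{r-1}\cdot\bigl(2r-\ell+2(m-q)(\ell-r)\bigr)$ for integers $q\in[0,m]$. Then $h(q)<h(m-1)$ for all integers $q\in[0,m]\setminus\{m-1\}$.
   Context: For an integer $z$ and positive integer $k$, $(z)_k=z(z-1)\cdots(z-k+1)$ if $z>k-1$ and $(z)_k=0$ otherwise. $m_{r,\ell}$ is the unique integer $k\ge r$ maximizing $f(k)=\frac{(k-1)(k-2)\cdots(k-r+1)}{k^{\ell-1}}$ over all integers $k\ge r$. *)

From mathcomp Require Import all_boot all_order all_algebra.
Set Implicit Arguments. Unset Strict Implicit. Unset Printing Implicit Defensive.
Import Order.TTheory GRing.Theory Num.Theory.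
Local Open Scope ring_scope.

Definition ffall (z k : nat) : nat := (z ^_ k)%N.

Definition fval (r l k : nat) : rat :=
  (ffall k.-1 r.-1)%:R / (k ^ l.-1)%:R.

Definition is_m_rl (r l m : nat) : Prop :=
  (r <= m)%N /\ forall k : nat, (r <= k)%N -> k != m -> fval r l k < fval r l m.

Definition hval (r l m q : nat) : int :=
  (ffall q r.-1)%:Z *
  (2 * r%:Z - l%:Z + 2 * (m%:Z - q%:Z) * (l%:Z - r%:Z)).

(* Write r = s + 1, l = n + 1 and a = l - r.  The ratio f(k+1)/f(k) equals
   k^l / ((k-r+1)(k+1)^(l-1)), and two bounds on (1 + 1/k)^(l-1) locate the
   maximiser: ((2k+2)/(2k))^N < (2k+1+N)/(2k+1-N) for N >= 2, and the first three
   terms of the binomial expansion.  They confine m to the window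
   (r-1) l < 2 a m < (r-1) l + 2 a r.  Writing h(q) = (q)_(r-1) G(q) with G linear,
   h(q+1)/h(q) = (q+1) G(q+1) / ((q+2-r) G(q)); on the window this ratio exceeds 1
   for r-1 <= q <= m-2 and is below 1 for q = m-1, while h vanishes for q < r-1. *)

From mathcomp Require Import all_boot all_order all_algebra.
From mathcomp Require Import ring lra zify.
Set Implicit Arguments. Unset Strict Implicit. Unset Printing Implicit Defensive.
Import Order.TTheory GRing.Theory Num.Theory.
Local Open Scope ring_scope.

Section PowerRatio.
Variable R : realDomainType.

Lemma exprDB_ratio_step (N D p A B : R) : 0 <= N -> 0 <= p -> (N + 1) * p < D ->
  A * (D - N * p) <= B * (D + N * p) ->
  (D + p) * A * (D - (N + 1) * p) * (D + N * p) + A * (2 * N * (N + 1) * p ^+ 3)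
    <= (D - p) * B * (D + (N + 1) * p) * (D + N * p).
Proof.
move=> hN hp hD IH.
have hDp : 0 <= (D - p) * (D + (N + 1) * p) by apply: mulr_ge0; nra.
have -> : (D + p) * A * (D - (N + 1) * p) * (D + N * p) + A * (2 * N * (N + 1) * p ^+ 3)
  = A * (D - N * p) * ((D - p) * (D + (N + 1) * p)) by ring.
have -> : (D - p) * B * (D + (N + 1) * p) * (D + N * p)
  = B * (D + N * p) * ((D - p) * (D + (N + 1) * p)) by ring.
by apply: ler_wpM2r.
Qed.

Lemma exprDB_ratio_le (n : nat) (D p : R) : 0 <= p -> n%:R * p < D ->
  (D + p) ^+ n * (D - n%:R * p) <= (D - p) ^+ n * (D + n%:R * p).
Proof.
move=> hp; elim: n => [|n IH] hD; first by rewrite !expr0 !mul1r mul0r subr0 addr0.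
rewrite -natr1 in hD *.
have hnp : 0 <= n%:R * p by rewrite mulr_ge0.
have hDn : 0 < D + n%:R * p by lra.
have hA : 0 <= (D + p) ^+ n by apply: exprn_ge0; lra.
have hc : 0 <= (D + p) ^+ n * (2 * n%:R * (n%:R + 1) * p ^+ 3).
  by apply: mulr_ge0 => //; rewrite !mulr_ge0 ?exprn_ge0 // addr_ge0.
have hDn' : n%:R * p < D by lra.
rewrite !exprS -(ler_pM2r hDn).
by apply: le_trans (exprDB_ratio_step (ler0n _ n) hp hD (IH hDn')); rewrite lerDl.
Qed.

Lemma exprDB_ratio_lt (n : nat) (D p : R) : (1 < n)%N -> 0 < p -> n%:R * p < D ->
  (D + p) ^+ n * (D - n%:R * p) < (D - p) ^+ n * (D + n%:R * p).
Proof.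
case: n => [|[|n]] // _ hp hD; rewrite -(@natr1 R n.+1) in hD *.
have hn : 0 < n.+1%:R :> R by rewrite ltr0n.
have hnp : 0 < n.+1%:R * p by rewrite mulr_gt0.
have hDn : 0 < D + n.+1%:R * p by lra.
have hA : 0 < (D + p) ^+ n.+1 by apply: exprn_gt0; lra.
have hc : 0 < (D + p) ^+ n.+1 * (2 * n.+1%:R * (n.+1%:R + 1) * p ^+ 3).
  by apply: mulr_gt0 => //; rewrite !mulr_gt0 ?exprn_gt0 // ltr_wpDr.
have hDn' : n.+1%:R * p < D by lra.
have := exprDB_ratio_step (ltW hn) (ltW hp) hD (exprDB_ratio_le (ltW hp) hDn').
rewrite (exprS (D + p) n.+1) (exprS (D - p) n.+1) -(ltr_pM2r hDn).
by apply: lt_le_trans; rewrite ltrDl.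
Qed.

Lemma binomial_three_terms_le (n : nat) (k : R) : 0 <= k ->
  k ^+ n * (2 * k ^+ 2 + 2 * n%:R * k + n%:R * (n%:R - 1)) <= 2 * (k + 1) ^+ n * k ^+ 2.
Proof.
move=> hk; elim: n => [|n IH]; first by rewrite !expr0; lra.
rewrite -[n.+1%:R]natr1 (exprS k n) (exprS (k + 1) n).
have hnn : 0 <= n%:R * (n%:R - 1) :> R.
  by case: n {IH} => [|n]; [rewrite mul0r | rewrite -natr1 addrK mulr_ge0 ?addr_ge0].
have hkn : 0 <= k ^+ n by exact: exprn_ge0.
have := ler_wpM2l (addr_ge0 hk ler01) IH.
have := mulr_ge0 hkn hnn.
have -> : k * k ^+ n * (2 * k ^+ 2 + 2 * (n%:R + 1) * k + (n%:R + 1) * (n%:R + 1 - 1))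
  = (k + 1) * (k ^+ n * (2 * k ^+ 2 + 2 * n%:R * k + n%:R * (n%:R - 1)))
    - k ^+ n * (n%:R * (n%:R - 1)) by ring.
lra.
Qed.

Lemma shifted_pow_lt (n : nat) (s k : R) : s + 1 <= n%:R -> n%:R <= 2 * s -> s + 1 <= k ->
  2 * (n%:R - s) * k <= s * (n%:R + 1) -> (k - s) * (k + 1) ^+ n < k ^+ n.+1.
Proof.
move=> hsn hns hsk hsmall.
have hn2 : (1 < n)%N by rewrite -(ltr_nat R); lra.
have hk : 0 < k by lra.
have hratio : (k + 1) ^+ n * (2 * k + 1 - n%:R) < k ^+ n * (2 * k + 1 + n%:R).
  rewrite -(ltr_pM2l (exprn_gt0 n (ltr0Sn R 1))) !mulrA -!exprMn.
  have hD : n%:R * 1 < 2 * k + 1 by rewrite mulr1; lra.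
  have := exprDB_ratio_lt hn2 ltr01 hD; rewrite !mulr1.
  have -> : 2 * k + 1 + 1 = 2 * (k + 1) by ring.
  by have -> : 2 * k + 1 - 1 = 2 * k by ring.
have hkey : (2 * k + 1 + n%:R) * (k - s) <= k * (2 * k + 1 - n%:R).
  rewrite -subr_ge0; have -> : k * (2 * k + 1 - n%:R) - (2 * k + 1 + n%:R) * (k - s)
    = s * (n%:R + 1) - 2 * (n%:R - s) * k by ring.
  by rewrite subr_ge0.
have hpos : 0 < 2 * k + 1 - n%:R by lra.
rewrite -(ltr_pM2r hpos) exprSr.
have hks : 0 < k - s by lra.
have hkn : 0 <= k ^+ n by rewrite exprn_ge0 // ltW.
apply: (lt_le_trans (y := (k - s) * (k ^+ n * (2 * k + 1 + n%:R)))).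
  by rewrite -mulrA ltr_pM2l.
have := ler_wpM2l hkn hkey; lra.
Qed.

Lemma shifted_pow_ge (n : nat) (s k : R) : s + 1 <= n%:R -> n%:R <= 2 * s -> s + 1 <= k ->
  s * (3 * n%:R - 2 * s + 1) <= 2 * (n%:R - s) * k -> k ^+ n.+1 <= (k - s) * (k + 1) ^+ n.
Proof.
move=> hsn hns hsk hlarge.
have hk : 0 < k by lra.
have hpoly : 2 * k ^+ 3 <= (k - s) * (2 * k ^+ 2 + 2 * n%:R * k + n%:R * (n%:R - 1)).
  have hq : 0 <= (3 * n%:R - 2 * s + 1) * (n%:R + 2 * s - 1) - 2 * n%:R * (n%:R - 1).
    have -> : (3 * n%:R - 2 * s + 1) * (n%:R + 2 * s - 1) - 2 * n%:R * (n%:R - 1)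
      = (s - 1) * (s + 5) + (n%:R - s) * (n%:R - s) + 6 * (n%:R - s) * s + 4 by ring.
    have h1 : 0 <= (s - 1) * (s + 5) by apply: mulr_ge0; lra.
    have h2 : 0 <= 6 * (n%:R - s) * s by apply: mulr_ge0; lra.
    have h3 : 0 <= (n%:R - s) * (n%:R - s) by apply: mulr_ge0; lra.
    lra.
  rewrite -subr_ge0 -(pmulr_rge0 _ (ltr0Sn R 1)).
  have -> : 2 * ((k - s) * (2 * k ^+ 2 + 2 * n%:R * k + n%:R * (n%:R - 1)) - 2 * k ^+ 3)
    = s * ((3 * n%:R - 2 * s + 1) * (n%:R + 2 * s - 1) - 2 * n%:R * (n%:R - 1))
      + (2 * k + n%:R + 2 * s - 1) * (2 * (n%:R - s) * k - s * (3 * n%:R - 2 * s + 1)) by ring.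
  by apply: addr_ge0; apply: mulr_ge0 => //; lra.
have hbin := binomial_three_terms_le n (ltW hk).
rewrite -(ler_pM2r (_ : 0 < 2 * k ^+ 2)); last by rewrite pmulr_rgt0 ?exprn_gt0.
have hkn : 0 <= k ^+ n by rewrite exprn_ge0 // ltW.
have hks : 0 <= k - s by lra.
have -> : k ^+ n.+1 * (2 * k ^+ 2) = k ^+ n * (2 * k ^+ 3) by rewrite !exprS; ring.
have -> : (k - s) * (k + 1) ^+ n * (2 * k ^+ 2) = (k - s) * (2 * (k + 1) ^+ n * k ^+ 2).
  by ring.
apply: le_trans (ler_wpM2l hkn hpoly) _.
by rewrite mulrCA ler_wpM2l.
Qed.
End PowerRatio.

Lemma ffactS_mul_sub (k s : nat) : (k.+1 ^_ s * (k.+1 - s) = k.+1 * k ^_ s)%N.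
Proof. by rewrite -ffactnSr ffactSS. Qed.

Lemma fval_succ_mul (s n k : nat) : (s < k)%N ->
  fval s.+1 n.+1 k.+1 * ((k - s) * k.+1 ^ n)%:R = fval s.+1 n.+1 k * (k ^ n.+1)%:R.
Proof.
case: k => // k _; rewrite /fval /ffall /= !natrM !natrX exprS.
have := congr1 (fun x : nat => x%:R : rat) (ffactS_mul_sub k s); rewrite /= !natrM => E.
rewrite mulrCA divfK ?expf_neq0 ?pnatr_eq0 // [RHS]mulrCA divfK ?expf_neq0 ?pnatr_eq0 //.
by rewrite mulrC E.
Qed.

Lemma fval_gt0 (s l k : nat) : (s < k)%N -> 0 < fval s.+1 l k.
Proof.
move=> hsk; rewrite /fval /ffall divr_gt0 // ltr0n ?ffact_gt0 ?expn_gt0 /=.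
- lia.
- by rewrite (leq_ltn_trans (leq0n s) hsk).
Qed.

Lemma cross_mul_ltr (R : numDomainType) (x y u v : R) : 0 < y -> 0 < u -> x * u = y * v ->
  (x < y) = (v < u) /\ (y < x) = (u < v).
Proof. by move=> hy hu e; split; rewrite -(ltr_pM2r hu) e ltr_pM2l. Qed.

Lemma fval_succ_cmp (s n k : nat) : (s < k)%N ->
  (fval s.+1 n.+1 k.+1 < fval s.+1 n.+1 k) = (k%:Z ^+ n.+1 < (k%:Z - s%:Z) * (k%:Z + 1) ^+ n)
  /\ (fval s.+1 n.+1 k < fval s.+1 n.+1 k.+1) = ((k%:Z - s%:Z) * (k%:Z + 1) ^+ n < k%:Z ^+ n.+1).
Proof.
move=> hsk; have hu : 0 < ((k - s) * k.+1 ^ n)%:R :> rat.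
  by rewrite ltr0n muln_gt0 expn_gt0 subn_gt0 hsk.
have [-> ->] := cross_mul_ltr (fval_gt0 n.+1 hsk) hu (fval_succ_mul n hsk).
have -> : k%:Z ^+ n.+1 = (k ^ n.+1)%N by rewrite -!natz natrX.
have -> : (k%:Z - s%:Z) * (k%:Z + 1) ^+ n = ((k - s) * k.+1 ^ n)%N.
  by rewrite -!natz natrM natrX natrB ?(ltnW hsk) // -addn1 natrD.
by rewrite !ltr_nat !ltz_nat.
Qed.

Lemma m_rl_window (s n m : nat) : (s < n)%N -> (n <= 2 * s)%N -> is_m_rl s.+1 n.+1 m ->
  s%:Z * (n%:Z + 1) < 2 * (n%:Z - s%:Z) * m%:Z
  /\ 2 * (n%:Z - s%:Z) * m%:Z < s%:Z * (n%:Z + 1) + 2 * (n%:Z - s%:Z) * (s%:Z + 1).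
Proof.
move=> hsn hns [hsm hmax].
have hs1 : s%:Z + 1 <= n%:R by rewrite natz; lia.
have hs2 : n%:R <= 2 * s%:Z by rewrite natz; lia.
split.
- rewrite ltNge; apply/negP => hsmall.
  have hm : s%:Z + 1 <= m%:Z by rewrite -PoszD lez_nat addn1.
  have := hmax m.+1 (leqW hsm) (negbT (gtn_eqF (ltnSn m))).
  rewrite (fval_succ_cmp n hsm).1; apply/negP; rewrite -leNgt ltW //.
  by apply: (shifted_pow_lt hs1 hs2 hm); rewrite [n%:R]natz.
case: m hsm hmax => // k; rewrite ltnS leq_eqVlt => /predU1P [<- _ | hsk hmax].
- have : 0 < s%:Z * (n%:Z + 1) by rewrite mulr_gt0 //; lia.
  lra.
rewrite ltNge; apply/negP => hlarge.
have hk : s%:Z + 1 <= k%:Z by rewrite -PoszD lez_nat addn1.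
have := hmax k hsk (negbT (ltn_eqF (ltnSn k))).
rewrite (fval_succ_cmp n hsk).2; apply/negP; rewrite -leNgt.
apply: (shifted_pow_ge hs1 hs2 hk); rewrite [n%:R]natz.
rewrite -PoszD addn1 in hlarge; lra.
Qed.

Lemma ffact_mul_succ_cmp (s q : nat) (x y : int) : (s <= q)%N ->
  ((q ^_ s)%:Z * x < (q.+1 ^_ s)%:Z * y) = ((q.+1 - s)%:Z * x < q.+1%:Z * y)
  /\ ((q.+1 ^_ s)%:Z * y < (q ^_ s)%:Z * x) = (q.+1%:Z * y < (q.+1 - s)%:Z * x).
Proof.
move=> hsq.
have hc : 0 < (q.+1 - s)%:Z by rewrite ltz_nat subn_gt0 ltnS.
have hf : 0 < (q ^_ s)%:Z by rewrite ltz_nat ffact_gt0.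
have e : (q.+1 ^_ s)%:Z * y * (q.+1 - s)%:Z = (q ^_ s)%:Z * (q.+1%:Z * y).
  by rewrite mulrAC -PoszM ffactS_mul_sub PoszM mulrCA mulrA.
have e' : (q ^_ s)%:Z * x * (q.+1 - s)%:Z = (q ^_ s)%:Z * ((q.+1 - s)%:Z * x).
  by rewrite mulrAC -mulrA.
by split; rewrite -(ltr_pM2r hc) e e' ltr_pM2l.
Qed.

Section HvalProfile.
Variables s n m : nat.
Hypothesis hsm : (s < m)%N.
Hypothesis hsn : (s < n)%N.
Hypothesis window_lo : s%:Z * (n%:Z + 1) < 2 * (n%:Z - s%:Z) * m%:Z.
Hypothesis window_hi :
  2 * (n%:Z - s%:Z) * m%:Z < s%:Z * (n%:Z + 1) + 2 * (n%:Z - s%:Z) * (s%:Z + 1).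

Local Notation h := (hval s.+1 n.+1 m).

Lemma hvalE (q : nat) :
  h q = (q ^_ s)%:Z * (s%:Z + 1 - (n%:Z - s%:Z) + 2 * (n%:Z - s%:Z) * (m%:Z - q%:Z)).
Proof. by rewrite /hval /ffall !intS; congr (_ * _); ring. Qed.

Lemma hval_small (q : nat) : (q < s)%N -> h q = 0.
Proof. by move=> hqs; rewrite hvalE ffact_small ?mul0r. Qed.

Lemma hval_succ_gt (q : nat) : (s <= q)%N -> (q.+2 <= m)%N -> h q < h q.+1.
Proof.
move=> hsq hqm; rewrite !hvalE (ffact_mul_succ_cmp _ _ hsq).1 -subzn ?leqW // !intS.
have : 0 <= (n%:Z - s%:Z) * (s%:Z + 1) * (m%:Z - q%:Z - 2).
  by rewrite !mulr_ge0 //; lia.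
move: window_hi; lra.
Qed.

Let hm : m = m.-1.+1. Proof. by rewrite prednK // (leq_ltn_trans _ hsm). Qed.
Let hsk : (s <= m.-1)%N. Proof. by rewrite -ltnS -hm. Qed.
Let hmZ : m%:Z = m.-1%:Z + 1. Proof. by rewrite {1}hm intS addrC. Qed.

Lemma hval_pred_gt0 : 0 < h m.-1.
Proof.
rewrite hvalE mulr_gt0 ?ltz_nat ?ffact_gt0 // hmZ (addrC m.-1%:Z) addrK mulr1.
have : s%:Z < n%:Z by rewrite ltz_nat.
have : 0 <= s%:Z by [].
lra.
Qed.

Lemma hval_last_lt : h m < h m.-1.
Proof.
rewrite !hvalE [in m ^_ s]hm (ffact_mul_succ_cmp _ _ hsk).2 -subzn ?leqW // !intS.
move: window_lo; rewrite hmZ; lra.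
Qed.

Lemma hval_max (q : nat) : (q <= m)%N -> q != m.-1 -> h q < h m.-1.
Proof.
move=> hqm hqk.
have [hqs | hsq] := ltnP q s; first by rewrite hval_small // hval_pred_gt0.
have [-> | hqm'] := eqVneq q m; first exact: hval_last_lt.
have hlt : (q < m.-1)%N by move: hqm hqk hqm' hsm; lia.
have hpm : (m.-1 < m)%N by rewrite {2}hm.
pose D := [pred i : nat | s <= i < m]%N.
have hinc : {in D &, {homo h : i j / (i < j)%N >-> i < j}}.
  apply: homo_ltn_in.
  - exact: lt_trans.
  - move=> i j /andP [hi _] /andP [_ hj] k /andP [hik hkj].
    by rewrite inE (ltnW (leq_ltn_trans hi hik)) (ltn_trans hkj hj).
  - by move=> i /andP [hi _] /andP [_ hi1]; apply: hval_succ_gt.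
by apply: hinc; rewrite ?inE ?hsq ?hsk ?hpm ?(ltn_trans hlt hpm).
Qed.
End HvalProfile.

Theorem lemma4p3 (r l m : nat) :
  (2 <= r)%N -> (r.+1 <= l)%N -> (l <= 2 * r - 1)%N ->
  is_m_rl r l m ->
  forall q : nat, (q <= m)%N -> q != m.-1 ->
    hval r l m q < hval r l m m.-1.
Proof.
case: r => [//|s] _; case: l => [//|n]; rewrite !ltnS => hsn hns2 hm.
have hns : (n <= 2 * s)%N by lia.
have [window_lo window_hi] := m_rl_window hsn hns hm.
exact: hval_max hm.1 hsn window_lo window_hi.
Qed.
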